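(* Let $(G,\cdot)$ be a loop with identity $e$ and $(H,\cdot)$ a non-trivial subloop of exponent $2$ (i.e. $ss=e$ for all $s\in H$) such that $(xs\cdot z)s=x(sz\cdot s)$ for all $x,z\in G$, $s\in H$. Then for every $s\in H$, the map $L_sR_s^{-1}$ is a second Smarandache semi-automorphism of $G_H$, i.e. $e(L_sR_s^{-1})=e$ and $(ty\cdot t)L_sR_s^{-1}=(tL_sR_s^{-1}\cdot yL_sR_s^{-1})\,tL_sR_s^{-1}$ for all $y\in G$, $t\in H$.
   Context: Juxtaposition binds more tightly than $\cdot$. Maps are written on the right and composed left to right; $xR_s=x\cdot s$, $xL_s=s\cdot x$. *)

(* A loop: a carrier with a binary operation, an identity element, and left and
   right divisions making every left translation L_a : x |-> a.x and every right
   translation R_a : x |-> x.a a bijection (the division operations are their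
   inverses). *)
Record Loop := {
  carrier :> Type;
  mul : carrier -> carrier -> carrier;
  e : carrier;
  ldiv : carrier -> carrier -> carrier;  (* ldiv a b = a \ b, i.e. b L_a^{-1} *)
  rdiv : carrier -> carrier -> carrier;  (* rdiv b a = b / a, i.e. b R_a^{-1} *)
  mul_e_l : forall x, mul e x = x;
  mul_e_r : forall x, mul x e = x;
  ldiv_mul : forall a x, ldiv a (mul a x) = x;
  mul_ldiv : forall a b, mul a (ldiv a b) = b;
  rdiv_mul : forall a x, rdiv (mul x a) a = x;
  mul_rdiv : forall a b, mul (rdiv b a) a = b
}.

Arguments mul {l}.
Arguments e {l}.
Arguments ldiv {l}.
Arguments rdiv {l}.

(* Translations (maps written on the right in the paper: x R_s = x.s, x L_s = s.x). *)
Definition Lmap {G : Loop} (s x : G) : G := mul s x.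
Definition Rmap {G : Loop} (s x : G) : G := mul x s.
Definition Rinv {G : Loop} (s x : G) : G := rdiv x s.

(* The map L_s R_s^{-1} (composition left to right): x |-> (s.x) R_s^{-1}. *)
Definition LRinv {G : Loop} (s : G) (x : G) : G := Rinv s (Lmap s x).

Definition subloop (G : Loop) (H : G -> Prop) : Prop :=
  H e /\
  (forall x y, H x -> H y -> H (mul x y)) /\
  (forall x y, H x -> H y -> H (ldiv x y)) /\
  (forall x y, H x -> H y -> H (rdiv x y)).

Definition second_S_semi_automorphism (G : Loop) (H : G -> Prop) (f : G -> G) : Prop :=
  f e = e /\
  forall (y t : G), H t -> f (mul (mul t y) t) = mul (mul (f t) (f y)) (f t).


(* Taking x := e in the identity (xs.z)s = x(sz.s) and using ss = e gives the
   right inverse property (us)s = u for s in H.  Hence y R_s^{-1} = ys, so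
   L_s R_s^{-1} is the sandwich x |-> (sx)s, and the semi-automorphism law
   follows from three more instances of the identity. *)

Section ExponentTwoSubloop.

Variable G : Loop.
Variable H : G -> Prop.

Hypothesis H_exp2 : forall s, H s -> mul s s = e.
Hypothesis H_identity :
  forall (x z s : G), H s -> mul (mul (mul x s) z) s = mul x (mul (mul s z) s).

Lemma mul_mulK (u s : G) : H s -> mul (mul u s) s = u.
Proof.
  intros Hs.
  pose proof (H_identity u e s Hs) as E.
  now rewrite !mul_e_r, H_exp2, mul_e_r in E.
Qed.

Lemma rdiv_exp2 (x s : G) : H s -> rdiv x s = mul x s.
Proof.
  intros Hs.
  pose proof (rdiv_mul G s (mul x s)) as E.
  now rewrite mul_mulK in E by assumption.
Qed.

Lemma LRinv_sandwich (s x : G) : H s -> LRinv s x = mul (mul s x) s.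
Proof. intros Hs. unfold LRinv, Rinv, Lmap. now apply rdiv_exp2. Qed.

Lemma LRinv_e (s : G) : H s -> LRinv s e = e.
Proof. intros Hs. rewrite LRinv_sandwich, mul_e_r; auto. Qed.

Lemma LRinv_semi_morph (s y t : G) : H s -> H t ->
  LRinv s (mul (mul t y) t)
  = mul (mul (LRinv s t) (LRinv s y)) (LRinv s t).
Proof.
  intros Hs Ht.
  rewrite !LRinv_sandwich by assumption.
  assert (left_side : mul s (mul (mul t y) t) = mul (mul (mul s t) y) t)
    by (symmetry; now apply H_identity).
  assert (inner : mul (mul (mul s t) s) (mul (mul s y) s) = mul (mul (mul s t) y) s).
  { rewrite <- H_identity by assumption. now rewrite mul_mulK. }
  rewrite left_side, inner, <- H_identity by assumption.
  now rewrite mul_mulK.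
Qed.

End ExponentTwoSubloop.

Theorem corollary3p3 (G : Loop) (H : G -> Prop) :
  subloop G H ->
  (exists s0, H s0 /\ s0 <> e) ->
  (forall s, H s -> mul s s = e) ->
  (forall (x z s : G), H s -> mul (mul (mul x s) z) s = mul x (mul (mul s z) s)) ->
  forall s, H s -> second_S_semi_automorphism G H (LRinv s).
Proof.
  intros _ _ H_exp2 H_identity s Hs.
  split.
  - now apply (LRinv_e G H H_exp2 H_identity).
  - intros y t Ht.
    now apply (LRinv_semi_morph G H H_exp2 H_identity).
Qed.
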